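(* Let $L\subset\mathbb{Z}^m$ be a non-zero lattice with $L\cap\mathbb{N}^m=\{\mathbf 0\}$ and $\mathrm{Sat}(L)=\ker_{\mathbb{Z}}(\mathcal{A})$. If $\mathrm{rad}(I_L)=\mathrm{rad}(F_1,\ldots,F_s)$ for some $\mathcal{A}$-homogeneous polynomials $F_1,\ldots,F_s\in I_L$, then $\bigcup_{i=1}^s\Gamma_L(F_i)$ is a spanning subcomplex of $\Gamma_L$, and each $\Gamma_L(F_i)$ is a simplex of $\Gamma_L$.
   Context: $K$ is a field, $\mathbf x^{\mathbf u}=x_1^{u_1}\cdots x_m^{u_m}$, $\mathbf u_\pm$ the positive/negative parts of $\mathbf u$, $I_L=(\mathbf x^{\mathbf u_+}-\mathbf x^{\mathbf u_-}:\mathbf u\in L)\subset K[x_1,\ldots,x_m]$, $\mathrm{Sat}(L)=\{\mathbf u:d\mathbf u\in L\text{ for some nonzero }d\in\mathbb{Z}\}$, $\mathcal{A}=\{\mathbf a_1,\ldots,\mathbf a_m\}\subset\mathbb{Z}^n$, $\ker_{\mathbb{Z}}(\mathcal{A})=\{\mathbf q:\sum q_i\mathbf a_i=0\}$. The $\mathcal{A}$-degree of $\mathbf x^{\mathbf u}$ is $\sum u_i\mathbf a_i$; a polynomial is $\mathcal{A}$-homogeneous if all its monomials have equal $\mathcal{A}$-degree. A monomial $M$ is indispensable of $I_L$ if every system of binomial generators contains a binomial having $M$ as a monomial. $\mathcal{T}_{\min}$: inclusion-minimal supports of indispensable monomials ($\mathrm{supp}(\mathbf x^{\mathbf w})=\{i:w_i\ne0\}$).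 $\Gamma_L$: simplicial complex on $\mathcal{T}_{\min}$, with $\{E_1,\ldots,E_k\}$ a face iff there are monomials $M_i$, $\mathrm{supp}(M_i)=E_i$, of equal $\mathcal{A}$-degree. $\Gamma_L(F)$: induced subcomplex on those $E\in\mathcal{T}_{\min}$ equal to the support of some monomial occurring in $F$. Spanning subcomplex: one with the same vertex set as $\Gamma_L$. *)

From HB Require Import structures.
From mathcomp Require Import all_boot all_order all_algebra.
From mathcomp Require Import mpoly.
Unset Printing Implicit Defensive.
Import Order.TTheory GRing.Theory Num.Theory.
Local Open Scope ring_scope.

Definition is_lattice (m : nat) (L : {ffun 'I_m -> int} -> Prop) : Prop :=
  L 0 /\ (forall u v, L u -> L v -> L (u - v)).

Definition pos_part (m : nat) (u : {ffun 'I_m -> int}) : 'X_{1..m} :=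
  [multinom (`|Num.max (u i) 0|%N) | i < m].
Definition neg_part (m : nat) (u : {ffun 'I_m -> int}) : 'X_{1..m} :=
  [multinom `|Num.max (- u i) 0|%N | i < m].

Definition ideal_gen (K : fieldType) (m : nat) (S : {mpoly K[m]} -> Prop)
  (f : {mpoly K[m]}) : Prop :=
  exists r : seq ({mpoly K[m]} * {mpoly K[m]}),
    (forall p, p \in r -> S p.1) /\ f = \sum_(p <- r) p.2 * p.1.

Definition radical (K : fieldType) (m : nat) (I : {mpoly K[m]} -> Prop)
  (f : {mpoly K[m]}) : Prop := exists k : nat, I (f ^+ k).

Definition lattice_binomial (K : fieldType) (m : nat)
  (L : {ffun 'I_m -> int} -> Prop) (f : {mpoly K[m]}) : Prop :=
  exists u, L u /\ f = 'X_[pos_part m u] - 'X_[neg_part m u].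
Definition I_L (K : fieldType) (m : nat) (L : {ffun 'I_m -> int} -> Prop) :=
  ideal_gen K m (lattice_binomial K m L).

Definition is_binomial (K : fieldType) (m : nat) (f : {mpoly K[m]}) : Prop :=
  exists a b : 'X_{1..m}, a != b /\ f = 'X_[a] - 'X_[b].

Definition binomial_gen_system (K : fieldType) (m : nat)
  (L : {ffun 'I_m -> int} -> Prop) (S : {mpoly K[m]} -> Prop) : Prop :=
  (forall f, S f -> is_binomial K m f) /\
  (forall f, ideal_gen K m S f <-> I_L K m L f).

Definition indispensable (K : fieldType) (m : nat)
  (L : {ffun 'I_m -> int} -> Prop) (M : 'X_{1..m}) : Prop :=
  forall S, binomial_gen_system K m L S -> exists f, S f /\ M \in msupp f.

Definition msupport (m : nat) (M : 'X_{1..m}) : {set 'I_m} :=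
  [set i | M i != 0%N].

Definition Tmin (K : fieldType) (m : nat) (L : {ffun 'I_m -> int} -> Prop)
  (E : {set 'I_m}) : Prop :=
  (exists M, indispensable K m L M /\ msupport m M = E) /\
  ~ (exists M, indispensable K m L M /\ msupport m M \proper E).

(* A-degree of a monomial; A is given by its columns a_i = A i *)
Definition Adeg (m n : nat) (A : 'I_m -> 'I_n -> int) (M : 'X_{1..m})
  : {ffun 'I_n -> int} :=
  [ffun j => \sum_(i < m) (M i)%:Z * A i j].

Definition A_homogeneous (K : fieldType) (m n : nat) (A : 'I_m -> 'I_n -> int)
  (F : {mpoly K[m]}) : Prop :=
  forall M M', M \in msupp F -> M' \in msupp F -> Adeg m n A M = Adeg m n A M'.

Definition Gamma_face (K : fieldType) (m n : nat) (L : {ffun 'I_m -> int} -> Prop)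
  (A : 'I_m -> 'I_n -> int) (sigma : {set {set 'I_m}}) : Prop :=
  (forall E, E \in sigma -> Tmin K m L E) /\
  exists (Mf : {set 'I_m} -> 'X_{1..m}) (d : {ffun 'I_n -> int}),
    forall E, E \in sigma -> msupport m (Mf E) = E /\ Adeg m n A (Mf E) = d.

Definition vertex_of_poly (K : fieldType) (m : nat) (L : {ffun 'I_m -> int} -> Prop)
  (F : {mpoly K[m]}) (E : {set 'I_m}) : Prop :=
  Tmin K m L E /\ exists M, M \in msupp F /\ msupport m M = E.

Definition GammaF_face (K : fieldType) (m n : nat) (L : {ffun 'I_m -> int} -> Prop)
  (A : 'I_m -> 'I_n -> int) (F : {mpoly K[m]}) (sigma : {set {set 'I_m}}) : Prop :=
  Gamma_face K m n L A sigma /\ (forall E, E \in sigma -> vertex_of_poly K m L F E).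

Definition spanning_subcomplex (K : fieldType) (m n : nat)
  (L : {ffun 'I_m -> int} -> Prop) (A : 'I_m -> 'I_n -> int)
  (C : {set {set 'I_m}} -> Prop) : Prop :=
  (forall sigma, C sigma -> Gamma_face K m n L A sigma) /\
  (forall E, Gamma_face K m n L A [set E] -> C [set E]).

Definition is_simplex_of (K : fieldType) (m n : nat)
  (L : {ffun 'I_m -> int} -> Prop) (A : 'I_m -> 'I_n -> int)
  (C : {set {set 'I_m}} -> Prop) : Prop :=
  exists sigma, Gamma_face K m n L A sigma /\
    (forall tau, C tau <-> tau \subset sigma).

(* The vertices of Gamma_L are inclusion-minimal positive supports supp(w+)
   of nonzero w in L: for such a support E, a w of least degree among the
   lattice vectors with supp(w+) in E makes x^w+ indispensable.  Setting
   x_i = 0 for i outside E is a ring morphism sending the binomial of w to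
   x^w+, hence its powers to nonzero monomials, while on I_L it keeps only
   monomials divisible by some x^v+ with supp(v+) in E, which by minimality
   have support exactly E.  As the F_i generate I_L up to radical, some F_i
   survives the substitution, i.e. has a monomial of support E.  Each
   Gamma_L(F_i) is a simplex because all monomials of F_i share one A-degree. *)
From HB Require Import structures.
From mathcomp Require Import all_boot all_order all_algebra.
From mathcomp Require Import mpoly.
From mathcomp Require Import boolp.
Import Order.TTheory GRing.Theory Num.Theory.
Local Open Scope ring_scope.

Section PositiveNegativeParts.
Context {m : nat}.
Implicit Type u : {ffun 'I_m -> int}.

Lemma pos_partE u i : pos_part m u i = if 0 < u i then `|u i|%N else 0%N.
Proof. by rewrite /pos_part mnmE; case: (leP (u i) 0). Qed.

Lemma neg_partE u i : neg_part m u i = if u i < 0 then `|u i|%N else 0%N.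
Proof. by rewrite /neg_part mnmE -oppr_gt0; case: (leP (- u i) 0); rewrite ?abszN. Qed.

Lemma pos_partN u : pos_part m (- u) = neg_part m u.
Proof. by apply/mnmP => i; rewrite pos_partE neg_partE ffunE oppr_gt0 abszN. Qed.

Lemma neg_partN u : neg_part m (- u) = pos_part m u.
Proof. by rewrite -pos_partN opprK. Qed.

Lemma pos_part0 : pos_part m 0 = 0%MM.
Proof. by apply/mnmP => i; rewrite pos_partE ffunE mnm0E. Qed.

Lemma neg_part0 : neg_part m 0 = 0%MM.
Proof. by rewrite -pos_partN oppr0 pos_part0. Qed.

Lemma neg_part_eq0 {u i} : pos_part m u i != 0%N -> neg_part m u i = 0%N.
Proof. by rewrite pos_partE neg_partE; case: ltgtP. Qed.

Lemma pos_part_eq0 {u i} : neg_part m u i != 0%N -> pos_part m u i = 0%N.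
Proof. by move=> ui; rewrite -neg_partN neg_part_eq0 // pos_partN. Qed.

Lemma pos_support_eq0 u : msupport m (pos_part m u) = set0 -> forall i, u i <= 0.
Proof.
move=> supp0 i; have : i \notin msupport m (pos_part m u) by rewrite supp0 inE.
by rewrite inE negbK pos_partE; case: ltP => // ui_gt0; rewrite absz_eq0 gt_eqF.
Qed.

End PositiveNegativeParts.

Section MonomialDegree.
Context {m : nat}.
Implicit Types M : 'X_{1..m}.

Lemma mdeg_lepm {M M'} : (M <= M')%MM -> (mdeg M <= mdeg M')%N.
Proof. by move/mnm_lepP => le; rewrite !mdegE; apply: leq_sum => i _. Qed.

Lemma lepm_mdeg_eq {M M'} : (M <= M')%MM -> (mdeg M' <= mdeg M)%N -> M = M'.
Proof.
move=> le; rewrite -(submK le) mdegD -{2}[mdeg M]add0n leq_add2r leqn0 mdeg_eq0.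
by move/eqP ->; rewrite add0m.
Qed.

End MonomialDegree.

Lemma nat_min_witness (P : nat -> Prop) :
  (exists n, P n) -> exists n, P n /\ forall k, P k -> (n <= k)%N.
Proof.
case=> n0 Pn0; have exP : exists n, `[< P n >] by exists n0; apply/asboolP.
case: (ex_minnP exP) => n /asboolP Pn nmin.
by exists n; split=> // k /asboolP /nmin.
Qed.

Section Restriction.
Context {K : fieldType} {m : nat}.
Implicit Types (S : {mpoly K[m]} -> Prop) (E : {set 'I_m}) (M : 'X_{1..m}).

Lemma ideal_gen_self S f : S f -> ideal_gen K m S f.
Proof.
move=> Sf; exists [:: (f, 1)]; rewrite big_seq1 mul1r.
by split=> // p; rewrite mem_seq1 => /eqP ->.
Qed.

Definition restrict E : {mpoly K[m]} -> {mpoly K[m]} :=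
  comp_mpoly [tuple if i \in E then 'X_i else 0 | i < m].
HB.instance Definition _ E := GRing.RMorphism.on (restrict E).

Lemma restrictX E M :
  restrict E 'X_[M] = if msupport m M \subset E then 'X_[M] else 0.
Proof.
rewrite /restrict comp_mpolyX; case: ifPn => [ME | /subsetPn [i iM iE]].
  rewrite [RHS]mpolyXE_id; apply: eq_bigr => i _; rewrite tnth_mktuple.
  case: ifPn => // iE; have : i \notin msupport m M by apply: contra iE; apply: (subsetP ME).
  by rewrite inE negbK => /eqP ->; rewrite !expr0.
rewrite (bigD1 i) //= tnth_mktuple (negbTE iE) expr0n.
by move: iM; rewrite inE => /negbTE ->; rewrite mul0r.
Qed.

Lemma msupp_restrict {E p M} :
  M \in msupp (restrict E p) -> M \in msupp p /\ msupport m M \subset E.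
Proof.
rewrite /restrict comp_mpolyEX => /msupp_sum_le /flattenP [s /mapP [M']].
rewrite mem_filter /= => M'p -> /msuppZ_le.
rewrite -/(restrict E 'X_[M']) restrictX; case: ifP => [M'E | _]; last by rewrite msupp0.
by rewrite msuppX mem_seq1 => /eqP ->.
Qed.

Lemma msupp_restrict_ideal_gen {S E g M} :
  ideal_gen K m S g -> M \in msupp (restrict E g) ->
  exists2 f, S f & exists2 M', M' \in msupp (restrict E f) & (M' <= M)%MM.
Proof.
case=> r [rS ->]; rewrite raddf_sum.
move=> /msupp_sum_le /flattenP [s /mapP [p]]; rewrite mem_filter /= => pr -> {s}.
rewrite rmorphM => /msuppM_le /allpairsP [[M1 M2] /= [_ M2p ->]].
by exists p.1; [exact: rS | exists M2; last exact: lem_addl].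
Qed.

Lemma restrict_ideal_gen_eq0 {S E g} :
  (forall f, S f -> restrict E f = 0) -> ideal_gen K m S g -> restrict E g = 0.
Proof.
move=> S0 Sg; apply/msuppnil0; case e: (msupp _) => [|M ms] //.
have /(msupp_restrict_ideal_gen Sg) : M \in msupp (restrict E g) by rewrite e mem_head.
by case=> f /S0 -> [M']; rewrite msupp0.
Qed.

End Restriction.

Section PointedLattice.
Context {m : nat} {L : {ffun 'I_m -> int} -> Prop}.
Hypothesis L_lattice : is_lattice m L.
Hypothesis L_pointed : forall u, L u -> (forall i, 0 <= u i) -> u = 0.
Implicit Types (u v w : {ffun 'I_m -> int}) (E : {set 'I_m}).

Lemma lattice_opp u : L u -> L (- u).
Proof. by case: L_lattice => L0 LB /(LB _ _ L0); rewrite sub0r. Qed.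

Lemma pos_support_neq0 {u} : L u -> u != 0 -> msupport m (pos_part m u) != set0.
Proof.
move=> Lu; apply: contraNneq => /pos_support_eq0 u_le0.
rewrite -oppr_eq0; apply/eqP/L_pointed; first exact: lattice_opp.
by move=> i; rewrite ffunE oppr_ge0.
Qed.

Lemma neg_support_neq0 {u} : L u -> u != 0 -> msupport m (neg_part m u) != set0.
Proof.
move=> Lu unz; rewrite -pos_partN pos_support_neq0 ?oppr_eq0 //; exact: lattice_opp.
Qed.

Definition minimal_pos_support E : Prop :=
  forall v, L v -> v != 0 -> msupport m (pos_part m v) \subset E ->
    msupport m (pos_part m v) = E.

Lemma minimal_pos_support_exists {v} : L v -> v != 0 ->
  exists w, [/\ L w, w != 0, minimal_pos_support (msupport m (pos_part m w))
              & msupport m (pos_part m w) \subset msupport m (pos_part m v)].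
Proof.
move=> Lv vnz.
pose P k := exists w, [/\ L w, w != 0,
  msupport m (pos_part m w) \subset msupport m (pos_part m v)
  & #|msupport m (pos_part m w)| = k].
have [_ [[w [Lw wnz wv <-]] wmin]] : exists k, P k /\ forall k', P k' -> (k <= k')%N.
  by apply: nat_min_witness; exists #|msupport m (pos_part m v)|, v.
exists w; split=> // v' Lv' v'nz v'w; apply/eqP; rewrite eqEcard v'w /=.
by apply: wmin; exists v'; split=> //; apply: subset_trans v'w wv.
Qed.

Lemma min_degree_exists {E w} : L w -> w != 0 -> msupport m (pos_part m w) \subset E ->
  exists w', [/\ L w', w' != 0, msupport m (pos_part m w') \subset E
    & forall v, L v -> v != 0 -> msupport m (pos_part m v) \subset E ->
        (mdeg (pos_part m w') <= mdeg (pos_part m v))%N].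
Proof.
move=> Lw wnz wE.
pose P k := exists v, [/\ L v, v != 0, msupport m (pos_part m v) \subset E
  & mdeg (pos_part m v) = k].
have [_ [[w' [Lw' w'nz w'E <-]] w'min]] : exists k, P k /\ forall k', P k' -> (k <= k')%N.
  by apply: nat_min_witness; exists (mdeg (pos_part m w)), w.
by exists w'; split=> // v Lv vnz vE; apply: w'min; exists v.
Qed.

Section LatticeIdeal.
Context {K : fieldType}.

Definition lattice_binom u : {mpoly K[m]} := 'X_[pos_part m u] - 'X_[neg_part m u].

Lemma restrict_dominates_pos_part {E g M} :
  I_L K m L g -> M \in msupp (restrict E g) ->
  exists v, [/\ L v, v != 0, msupport m (pos_part m v) \subset E
              & (pos_part m v <= M)%MM].
Proof.
move=> /msupp_restrict_ideal_gen Ig /Ig [_ [u [Lu ->]] [M' M'u le]].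
have [u0 | unz] := eqVneq u 0.
  by move: M'u; rewrite u0 pos_part0 neg_part0 subrr rmorph0 msupp0.
case/msupp_restrict: M'u => /msuppB_le; rewrite mem_cat !msuppX !mem_seq1 => M'u M'E.
have [v [Lv vnz M'v]] : exists v, [/\ L v, v != 0 & M' = pos_part m v].
  case/orP: M'u => /eqP ->; first by exists u.
  by exists (- u); rewrite pos_partN oppr_eq0; split=> //; exact: lattice_opp.
by exists v; rewrite -M'v.
Qed.

Lemma msupp_restrict_minimal {E g M} : minimal_pos_support E ->
  I_L K m L g -> M \in msupp (restrict E g) -> M \in msupp g /\ msupport m M = E.
Proof.
move=> Emin Ig MgE; have [Mg ME] := msupp_restrict MgE.
have [v [Lv vnz vE le]] := restrict_dominates_pos_part Ig MgE.
split=> //; apply/eqP; rewrite eqEsubset ME -(Emin v Lv vnz vE) /=.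
apply/subsetP => i; rewrite !inE; apply: contraNneq => Mi0.
by move/mnm_lepP: le => /(_ i); rewrite Mi0 leqn0.
Qed.

(* Since supp(w+) = E and supp(w-) is a nonempty set disjoint from it,
   only x^w+ survives. *)
Lemma restrict_lattice_binom {E w} : L w -> w != 0 -> msupport m (pos_part m w) = E ->
  restrict E (lattice_binom w) = 'X_[pos_part m w].
Proof.
move=> Lw wnz wE; rewrite /lattice_binom rmorphB /= !restrictX -wE subxx.
have /set0Pn [i] := neg_support_neq0 Lw wnz; rewrite inE => wi.
suff /negbTE -> : ~~ (msupport m (neg_part m w) \subset msupport m (pos_part m w)).
  by rewrite subr0.
by apply/subsetPn; exists i; rewrite !inE ?wi // negbK pos_part_eq0.
Qed.

Lemma pos_part_indispensable {E w} : minimal_pos_support E ->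
  L w -> w != 0 -> msupport m (pos_part m w) \subset E ->
  (forall v, L v -> v != 0 -> msupport m (pos_part m v) \subset E ->
     (mdeg (pos_part m w) <= mdeg (pos_part m v))%N) ->
  indispensable K m L (pos_part m w).
Proof.
move=> Emin Lw wnz wE wmin S [_ SI].
have Sw : ideal_gen K m S (lattice_binom w) by apply/SI/ideal_gen_self; exists w.
have : pos_part m w \in msupp (restrict E (lattice_binom w)).
  by rewrite (restrict_lattice_binom Lw wnz (Emin _ Lw wnz wE)) msuppX mem_head.
case/(msupp_restrict_ideal_gen Sw) => f Sf [M Mf le]; exists f; split=> //.
have If : I_L K m L f by apply/SI/ideal_gen_self.
have [v [Lv vnz vE leM]] := restrict_dominates_pos_part If Mf.
have <- : M = pos_part m w.
  exact: lepm_mdeg_eq le (leq_trans (wmin _ Lv vnz vE) (mdeg_lepm leM)).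
by case: (msupp_restrict Mf).
Qed.

Lemma indispensable_below {v} : L v -> v != 0 ->
  exists M, indispensable K m L M /\ msupport m M \subset msupport m (pos_part m v).
Proof.
move=> Lv vnz; have [w [Lw wnz wmin wv]] := minimal_pos_support_exists Lv vnz.
have [w' [Lw' w'nz w'w w'min]] := min_degree_exists Lw wnz (subxx _).
exists (pos_part m w'); split; last exact: subset_trans w'w wv.
exact: pos_part_indispensable wmin Lw' w'nz w'w w'min.
Qed.

Lemma Tmin_minimal_pos_support {E} : Tmin K m L E -> minimal_pos_support E.
Proof.
case=> [[M [_ <-]] noM] v Lv vnz vM; apply/eqP; apply: contraT => vMne.
have [M' [M'ind M'v]] := indispensable_below Lv vnz.
by case: noM; exists M'; split; last by rewrite (sub_proper_trans M'v) // properEneq vMne.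
Qed.

Lemma nonzero_lattice_binoms_gen_system :
  binomial_gen_system K m L (fun f => exists u, [/\ L u, u != 0 & f = lattice_binom u]).
Proof.
split=> [_ [u [Lu unz ->]] | f].
  exists (pos_part m u), (neg_part m u); split=> //.
  have /set0Pn [i] := pos_support_neq0 Lu unz; rewrite inE => ui.
  have neg_i0 := neg_part_eq0 ui.
  by apply: contraNneq ui => /mnmP /(_ i) ->; rewrite neg_i0.
split=> [[r [rS ->]] | [r [rI ->]]].
  by exists r; split=> // p /rS [u [Lu _ ->]]; exists u.
exists [seq p <- r | p.1 != 0]; split.
  move=> p; rewrite mem_filter => /andP [pnz pr]; have [u [Lu pu]] := rI p pr.
  exists u; split=> //; apply: contraNneq pnz => u0.
  by rewrite pu u0 pos_part0 neg_part0 subrr.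
rewrite big_filter [LHS](bigID (fun p => p.1 != 0)) /= [X in _ + X]big1 ?addr0 //.
by move=> p /negbNE /eqP ->; rewrite mulr0.
Qed.

Lemma Tmin_pos_support {E} : Tmin K m L E ->
  exists w, [/\ L w, w != 0 & msupport m (pos_part m w) = E].
Proof.
case=> [[M [Mind <-]] _].
have [_ [[u [Lu unz ->]] /msuppB_le]] := Mind _ nonzero_lattice_binoms_gen_system.
rewrite mem_cat !msuppX !mem_seq1 => /orP [] /eqP ->; first by exists u.
by exists (- u); rewrite pos_partN oppr_eq0; split=> //; exact: lattice_opp.
Qed.

Lemma Tmin_support_in_generators {S : {mpoly K[m]} -> Prop} {E} :
  (forall f, S f -> I_L K m L f) ->
  (forall f, radical K m (I_L K m L) f -> radical K m (ideal_gen K m S) f) ->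
  Tmin K m L E -> exists f, [/\ S f & exists2 M, M \in msupp f & msupport m M = E].
Proof.
move=> SI rad TE; apply: contrapT => noM.
have Emin := Tmin_minimal_pos_support TE.
have [w [Lw wnz wE]] := Tmin_pos_support TE.
have S0 f : S f -> restrict E f = 0.
  move=> Sf; apply/msuppnil0; case e: (msupp _) => [|M ms] //.
  have /(msupp_restrict_minimal Emin (SI f Sf)) [Mf ME] : M \in msupp (restrict E f).
    by rewrite e mem_head.
  by case: noM; exists f; split=> //; exists M.
have [k /(restrict_ideal_gen_eq0 S0)] : radical K m (ideal_gen K m S) (lattice_binom w).
  by apply: rad; exists 1%N; rewrite expr1; apply: ideal_gen_self; exists w.
rewrite rmorphXn /= restrict_lattice_binom // mpolyXn.
by move/(congr1 (@msupp _ _)); rewrite msuppX msupp0.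
Qed.

End LatticeIdeal.
End PointedLattice.

Section Simplex.
Context {K : fieldType} {m n : nat} {L : {ffun 'I_m -> int} -> Prop}.
Context {A : 'I_m -> 'I_n -> int} {F : {mpoly K[m]}}.
Hypothesis F_homogeneous : A_homogeneous K m n A F.

Lemma vertices_of_poly_face (tau : {set {set 'I_m}}) :
  (forall E, E \in tau -> vertex_of_poly K m L F E) -> Gamma_face K m n L A tau.
Proof.
move=> tauF; split=> [E /tauF [] // | ].
pose Mf E := nth 0%MM (msupp F) (find (fun M => msupport m M == E) (msupp F)).
exists Mf, (Adeg m n A (head 0%MM (msupp F))); move=> E /tauF [_ [M [MF ME]]].
have hasE : has (fun M => msupport m M == E) (msupp F) by apply/hasP; exists M; rewrite ?ME.
have MfF : Mf E \in msupp F by rewrite mem_nth // -has_find.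
split; first exact/eqP/(nth_find 0%MM hasE).
by apply: F_homogeneous => //; move: MfF; case: (msupp F) => //= M0 ms _; apply: mem_head.
Qed.

Lemma GammaF_simplex : is_simplex_of K m n L A (GammaF_face K m n L A F).
Proof.
exists [set E | `[< vertex_of_poly K m L F E >]]; split.
  by apply: vertices_of_poly_face => E; rewrite inE => /asboolP.
move=> tau; split=> [[_ tauF] | tau_sub].
  by apply/subsetP => E /tauF FE; rewrite inE; apply/asboolP.
have tauF E : E \in tau -> vertex_of_poly K m L F E.
  by move/(subsetP tau_sub); rewrite inE => /asboolP.
by split=> //; apply: vertices_of_poly_face.
Qed.

End Simplex.

Theorem corollary2p11 (K : fieldType) (m n : nat)
  (L : {ffun 'I_m -> int} -> Prop) (A : 'I_m -> 'I_n -> int)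
  (s : nat) (F : 'I_s -> {mpoly K[m]}) :
  is_lattice m L ->
  (exists u, L u /\ u != 0) ->
  (forall u, L u -> (forall i, 0 <= u i) -> u = 0) ->
  (forall q : {ffun 'I_m -> int},
     (exists d : int, d != 0 /\ L [ffun i => d * q i]) <->
     (forall j, \sum_(i < m) q i * A i j = 0)) ->
  (forall i, A_homogeneous K m n A (F i)) ->
  (forall i, I_L K m L (F i)) ->
  (forall f, radical K m (I_L K m L) f <->
             radical K m (ideal_gen K m (fun g => exists i, g = F i)) f) ->
  spanning_subcomplex K m n L A (fun sigma => exists i, GammaF_face K m n L A (F i) sigma) /\
  (forall i, is_simplex_of K m n L A (GammaF_face K m n L A (F i))).
Proof.
move=> L_lattice _ L_pointed _ F_hom FI rad.
split; last by move=> i; exact: GammaF_simplex (F_hom i).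
split=> [sigma [i []] // | E EGamma].
have TE : Tmin K m L E by apply: EGamma.1; rewrite in_set1.
have FI' f : (exists i, f = F i) -> I_L K m L f by case=> i ->.
have [f [[i ->] [M MF ME]]] :=
  Tmin_support_in_generators L_lattice L_pointed FI' (fun f => (rad f).1) TE.
by exists i; split=> // E'; rewrite in_set1 => /eqP ->; split=> //; exists M.
Qed.
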